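(* Let $\Delta\subseteq\Sigma$ for a finite alphabet $\Sigma$, and let $L\subseteq\Sigma^\omega$ be an aperiodic language such that each string in $L$ contains exactly one occurrence of a symbol from $\Delta$. Then $L$ can be written as a finite union of disjoint languages $R_\ell\, a\, R_r$ where $a\in\Delta$, $R_\ell\subseteq(\Sigma\setminus\Delta)^*$ and $R_r\subseteq(\Sigma\setminus\Delta)^\omega$. Moreover $R_\ell$ and $R_r$ are aperiodic.
   Context: A finite monoid $M$ is aperiodic if there is $n$ with $x^n=x^{n+1}$ for all $x\in M$. A language $K\subseteq\Sigma^*$ is aperiodic if it is recognized by a morphism $h:\Sigma^*\to M$ to a finite aperiodic monoid (i.e. $K=h^{-1}(h(K))$). For $\omega$-languages: given a morphism $h:\Sigma^*\to M$ to a finite monoid, $\omega$-strings $u,v$ are $h$-similar if they factor as $u=u_1u_2\cdots$, $v=v_1v_2\cdots$ with $u_i,v_i\in\Sigma^+$ and $h(u_i)=h(v_i)$; let $\cong$ be its transitive closure; $h$ recognizes $L\subseteq\Sigma^\omega$ if $w\in L$ and $u\cong w$ imply $u\in L$; $L$ is aperiodic if recognized by a morphism to a finite aperiodic monoid. *)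

From mathcomp Require Import all_boot.
Set Implicit Arguments. Unset Strict Implicit. Unset Printing Implicit Defensive.

Record finMonoid := FinMonoid {
  mcarrier :> finType;
  mmul : mcarrier -> mcarrier -> mcarrier;
  mone : mcarrier;
  mmulA : forall x y z, mmul x (mmul y z) = mmul (mmul x y) z;
  mmul1 : forall x, mmul mone x = x;
  mmul1r : forall x, mmul x mone = x }.

Definition mpow (M : finMonoid) (x : M) (n : nat) : M := iter n (mmul x) (mone M).

Definition aperiodic_monoid (M : finMonoid) : Prop :=
  exists n : nat, forall x : M, mpow x n = mpow x n.+1.

Definition is_morphism (Sigma : finType) (M : finMonoid) (h : seq Sigma -> M) : Prop :=
  h [::] = mone M /\ forall u v, h (u ++ v) = mmul (h u) (h v).

(* Finite-word languages K ⊆ Sigma^*; K = h^{-1}(h(K)). *)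
Definition recognizes (Sigma : finType) (M : finMonoid) (h : seq Sigma -> M)
  (K : seq Sigma -> Prop) : Prop :=
  forall u v, h u = h v -> K u -> K v.

Definition aperiodic_lang (Sigma : finType) (K : seq Sigma -> Prop) : Prop :=
  exists (M : finMonoid) (h : seq Sigma -> M),
    aperiodic_monoid M /\ is_morphism h /\ recognizes h K.

Definition oword (Sigma : Type) := nat -> Sigma.

(* A factorization w = w_0 w_1 ... into nonempty finite words is given by
   strictly increasing cut points c with c 0 = 0; w_i = w[c i, c (i+1)). *)
Definition cut_points (c : nat -> nat) : Prop :=
  c 0 = 0 /\ forall i, c i < c i.+1.

Definition segment (Sigma : Type) (w : oword Sigma) (c : nat -> nat) (i : nat)
  : seq Sigma := mkseq (fun j => w (c i + j)) (c i.+1 - c i).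

Definition hsimilar (Sigma : finType) (M : finMonoid) (h : seq Sigma -> M)
  (u v : oword Sigma) : Prop :=
  exists cu cv, cut_points cu /\ cut_points cv /\
    forall i, h (segment u cu i) = h (segment v cv i).

Inductive hcong (Sigma : finType) (M : finMonoid) (h : seq Sigma -> M)
  : oword Sigma -> oword Sigma -> Prop :=
| hcong_step u v : hsimilar h u v -> hcong h u v
| hcong_trans u v w : hcong h u v -> hcong h v w -> hcong h u w.

Definition orecognizes (Sigma : finType) (M : finMonoid) (h : seq Sigma -> M)
  (L : oword Sigma -> Prop) : Prop :=
  forall w u, L w -> hcong h u w -> L u.

Definition aperiodic_olang (Sigma : finType) (L : oword Sigma -> Prop) : Prop :=
  exists (M : finMonoid) (h : seq Sigma -> M),
    aperiodic_monoid M /\ is_morphism h /\ orecognizes h L.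

Definition ocat (Sigma : Type) (u : seq Sigma) (x : oword Sigma) : oword Sigma :=
  fun k => if k < size u then nth (x 0) u k else x (k - size u).

Definition in_concat (Sigma : finType) (Rl : seq Sigma -> Prop) (a : Sigma)
  (Rr : oword Sigma -> Prop) (w : oword Sigma) : Prop :=
  exists u x, Rl u /\ Rr x /\ w =1 ocat (rcons u a) x.

From mathcomp Require Import all_boot.
From mathcomp Require Import zify.

Set Implicit Arguments. Unset Strict Implicit. Unset Printing Implicit Defensive.

(* Index the pieces by pairs (a, m) with a in Delta and m in M, where h : Sigma^* -> M
   recognizes L: R_l(a, m) collects the prefixes u with h u = m that occur in front of
   a in a word of L, and R_r(a, m) the corresponding suffixes.  Since the Delta-letter
   of a word of L is unique, each word of L splits as u a x in exactly one way, which
   gives the union and its disjointness.  Replacing u by u' with h u = h u' in u a x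
   yields an h-similar word, so both R_l(a, m) and R_r(a, m) are again recognized by h. *)

Section OwordConcat.
Variable Sigma : finType.
Implicit Types (p u v : seq Sigma) (x y w : oword Sigma).

Lemma ocat_shift p x k : ocat p x (size p + k) = x k.
Proof. by rewrite /ocat ltnNge leq_addr /= addKn. Qed.

Lemma mkseq_ocat p x n : mkseq (ocat p x) (size p + n) = p ++ mkseq x n.
Proof.
rewrite /mkseq iotaD map_cat add0n; congr (_ ++ _).
  rewrite -[RHS](mkseq_nth (x 0)) /mkseq; apply/eq_in_map => j.
  by rewrite mem_iota add0n /ocat => /= ->.
by rewrite -[size p]addn0 iotaDl -map_comp; apply: eq_map => j /=; rewrite ocat_shift.
Qed.

Lemma ocat_rcons_lt u a x j d : j < size u -> ocat (rcons u a) x j = nth d u j.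
Proof.
move=> lt_j; rewrite /ocat size_rcons ltnS (ltnW lt_j) nth_rcons lt_j.
exact: set_nth_default.
Qed.

Lemma ocat_rcons_size u a x : ocat (rcons u a) x (size u) = a.
Proof. by rewrite /ocat size_rcons ltnSn nth_rcons ltnn eqxx. Qed.

Lemma ocat_rcons_inj u v a b x y : size u = size v ->
  ocat (rcons u a) x =1 ocat (rcons v b) y -> u = v /\ a = b.
Proof.
move=> eq_size E.
suff /eqP : rcons u a = rcons v b by rewrite eqseq_rcons => /andP[/eqP-> /eqP->].
rewrite -[rcons u a]cats0 -[rcons v b]cats0 -(mkseq_ocat _ x 0) -(mkseq_ocat _ y 0).
by rewrite !size_rcons eq_size; apply: eq_mkseq.
Qed.

Lemma oword_split w k : w =1 ocat (rcons (mkseq w k) (w k)) (fun j => w (k.+1 + j)).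
Proof.
move=> j; rewrite /ocat size_rcons size_mkseq nth_rcons size_mkseq.
case: (ltngtP j k) => [lt_jk|gt_jk|->].
- by rewrite ltnS (ltnW lt_jk) nth_mkseq.
- by rewrite ltnNge gt_jk /=; congr (w _); lia.
- by rewrite ?ltnSn ?ltnn ?eqxx.
Qed.

(* Cut points for [ocat p x] obtained from those of [x]: all but the first are moved
   by [n = size p], so that [p] is absorbed into the first segment. *)
Definition shift_cuts (n : nat) (c : nat -> nat) : nat -> nat :=
  fun j => if j is 0 then 0 else n + c j.

Lemma cut_points_shift n c : cut_points c -> cut_points (shift_cuts n c).
Proof.
move=> [c0 c_incr]; split=> // [[|i]] /=; last by rewrite ltn_add2l.
by have := c_incr 0; rewrite c0; lia.
Qed.

Lemma segment_ocat_head p x c : c 0 = 0 ->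
  segment (ocat p x) (shift_cuts (size p) c) 0 = p ++ segment x c 0.
Proof. by move=> c0; rewrite /segment /= c0 !subn0 -mkseq_ocat. Qed.

Lemma segment_ocat_shift p x c i :
  segment (ocat p x) (shift_cuts (size p) c) i.+1 = segment x c i.+1.
Proof. by rewrite /segment /= subnDl; apply: eq_mkseq => j; rewrite -addnA ocat_shift. Qed.

End OwordConcat.

Section HCongruence.
Variables (Sigma : finType) (M : finMonoid) (h : seq Sigma -> M).
Hypothesis h_morph : is_morphism h.

Lemma hsimilar_eq (x y : oword Sigma) : x =1 y -> hsimilar h x y.
Proof.
move=> E; exists id, id; split; [by []|split; [by []|]] => i.
by congr (h _); apply: eq_mkseq => j; rewrite E.
Qed.

Lemma hsimilar_ocat p q x y : h p = h q -> hsimilar h x y ->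
  hsimilar h (ocat p x) (ocat q y).
Proof.
move=> hpq [cx [cy [cut_x [cut_y E]]]].
exists (shift_cuts (size p) cx), (shift_cuts (size q) cy).
split; [exact: cut_points_shift | split; [exact: cut_points_shift |]].
case=> [|i]; last by rewrite !segment_ocat_shift.
by rewrite !segment_ocat_head ?cut_x.1 ?cut_y.1 // !h_morph.2 hpq E.
Qed.

Lemma hcong_ocat p (x y : oword Sigma) : hcong h x y -> hcong h (ocat p x) (ocat p y).
Proof.
elim=> [u v sim_uv|u v w _ IHuv _ IHvw]; last exact: hcong_trans IHuv IHvw.
exact/hcong_step/hsimilar_ocat.
Qed.

Variable L : oword Sigma -> Prop.
Hypothesis recL : orecognizes h L.

Lemma orecognizes_eq w w' : L w -> w =1 w' -> L w'.
Proof. by move=> Lw E; apply: (recL Lw); apply/hcong_step/hsimilar_eq => k. Qed.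

Lemma orecognizes_rcons_swap u v a x : h u = h v ->
  L (ocat (rcons u a) x) -> L (ocat (rcons v a) x).
Proof.
move=> huv Lu; apply: (recL Lu); apply/hcong_step/hsimilar_ocat => //.
  by rewrite -!cats1 !h_morph.2 huv.
exact: hsimilar_eq.
Qed.

End HCongruence.

Section Factorization.
Variables (Sigma : finType) (Delta : {set Sigma}) (M : finMonoid) (h : seq Sigma -> M).
Variable L : oword Sigma -> Prop.
Hypotheses (h_morph : is_morphism h) (recL : orecognizes h L).
Hypothesis L_one_Delta : forall w, L w -> exists! k, w k \in Delta.

Definition left_factor (p : Sigma * M) (u : seq Sigma) : Prop :=
  h u = p.2 /\ exists x, L (ocat (rcons u p.1) x).

Definition right_factor (p : Sigma * M) (x : oword Sigma) : Prop :=
  exists u, h u = p.2 /\ L (ocat (rcons u p.1) x).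

Definition factor_concat (p : Sigma * M) : oword Sigma -> Prop :=
  in_concat (left_factor p) p.1 (right_factor p).

Lemma Delta_position_size u a x k : a \in Delta ->
  L (ocat (rcons u a) x) -> ocat (rcons u a) x k \in Delta -> k = size u.
Proof.
move=> aD Lw; have [k0 [_ k0_uniq]] := L_one_Delta Lw.
by move=> /k0_uniq <-; apply: k0_uniq; rewrite ocat_rcons_size.
Qed.

Lemma notin_Delta_left u a x : a \in Delta ->
  L (ocat (rcons u a) x) -> all (fun s => s \notin Delta) u.
Proof.
move=> aD Lw; apply/(all_nthP a) => j lt_j; apply/negP => jD.
have jD' : ocat (rcons u a) x j \in Delta by rewrite (ocat_rcons_lt _ _ a lt_j).
by have := Delta_position_size aD Lw jD'; lia.
Qed.

Lemma notin_Delta_right u a x k : a \in Delta ->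
  L (ocat (rcons u a) x) -> x k \notin Delta.
Proof.
move=> aD Lw; apply/negP => kD.
rewrite -(ocat_shift (rcons u a)) in kD.
by have := Delta_position_size aD Lw kD; rewrite size_rcons; lia.
Qed.

Lemma factor_concat_sub p w : factor_concat p w -> L w.
Proof.
move=> [u [x [[hu _] [[v [hv Lv]] E]]]].
apply: (orecognizes_eq recL _ (fun k => esym (E k))).
by apply: (orecognizes_rcons_swap h_morph recL _ Lv); rewrite hu hv.
Qed.

Lemma factor_concat_cover w : L w ->
  exists2 p : Sigma * M, p.1 \in Delta & factor_concat p w.
Proof.
move=> Lw; have [k [kD _]] := L_one_Delta Lw.
have E := oword_split w k; have Lsplit := orecognizes_eq recL Lw E.
exists (w k, h (mkseq w k)) => //.
exists (mkseq w k), (fun j => w (k.+1 + j)).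
by split; [split=> //; exists (fun j => w (k.+1 + j)) | split=> //; exists (mkseq w k)].
Qed.

Lemma factor_concat_unique p q w : p.1 \in Delta -> q.1 \in Delta ->
  factor_concat p w -> factor_concat q w -> p = q.
Proof.
move=> pD qD wp; have Lw := factor_concat_sub wp.
move: wp => [u [x [[hu _] [_ Eu]]]] [v [y [[hv _] [_ Ev]]]].
have [k [_ k_uniq]] := L_one_Delta Lw.
have size_u : k = size u by apply: k_uniq; rewrite Eu ocat_rcons_size.
have size_v : k = size v by apply: k_uniq; rewrite Ev ocat_rcons_size.
have [uv pq1] : u = v /\ p.1 = q.1.
  by apply: (ocat_rcons_inj (x := x) (y := y)); [rewrite -size_u | move=> j; rewrite -Eu].
by rewrite [p]surjective_pairing [q]surjective_pairing -hu -hv uv pq1.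
Qed.

Lemma recognizes_left_factor p : recognizes h (left_factor p).
Proof.
move=> u v huv [hu [x Lx]]; split; first by rewrite -huv.
by exists x; exact (orecognizes_rcons_swap h_morph recL huv Lx).
Qed.

Lemma orecognizes_right_factor p : orecognizes h (right_factor p).
Proof.
move=> x y [u [hu Lu]] cong_yx; exists u; split=> //.
exact: recL _ _ Lu (hcong_ocat h_morph _ cong_yx).
Qed.

End Factorization.

Theorem mainTheorem8 (Sigma : finType) (Delta : {set Sigma})
  (L : oword Sigma -> Prop) :
  aperiodic_olang L ->
  (forall w, L w -> exists! k, w k \in Delta) ->
  exists (n : nat) (a : 'I_n -> Sigma) (Rl : 'I_n -> seq Sigma -> Prop)
         (Rr : 'I_n -> oword Sigma -> Prop),
    (forall i, a i \in Delta) /\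
    (forall i u, Rl i u -> all (fun s => s \notin Delta) u) /\
    (forall i x, Rr i x -> forall k, x k \notin Delta) /\
    (forall w, L w <-> exists i, in_concat (Rl i) (a i) (Rr i) w) /\
    (forall i j w, i <> j -> in_concat (Rl i) (a i) (Rr i) w ->
                   ~ in_concat (Rl j) (a j) (Rr j) w) /\
    (forall i, aperiodic_lang (Rl i)) /\
    (forall i, aperiodic_olang (Rr i)).
Proof.
move=> [M [h [aper [h_morph recL]]]] L_one_Delta.
pose I := {p : Sigma * M | p.1 \in Delta}.
pose ev (i : 'I_#|{: I}|) : Sigma * M := val (enum_val i).
have evD i : (ev i).1 \in Delta := valP (enum_val i).
exists #|{: I}|, (fun i => (ev i).1), (fun i => left_factor h L (ev i)),
  (fun i => right_factor h L (ev i)).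
split; [exact: evD|split].
  by move=> i u [_ [x Lx]]; exact: notin_Delta_left (evD i) Lx.
split; first by move=> i x [u [_ Lx]] k; exact: notin_Delta_right (evD i) Lx.
split.
  move=> w; split=> [Lw|[i]]; last exact: (factor_concat_sub h_morph recL (p := ev i)).
  have [p pD wp] := factor_concat_cover recL L_one_Delta Lw.
  by exists (enum_rank (exist _ p pD : I)); rewrite /ev enum_rankK.
split.
  move=> i j w neq_ij wi wj; apply/neq_ij/enum_val_inj/val_inj; change (ev i = ev j).
  exact: (factor_concat_unique h_morph recL L_one_Delta (evD i) (evD j) wi wj).
split=> i; exists M, h; split=> //; split=> //.
  exact (recognizes_left_factor h_morph recL (p := ev i)).
exact (orecognizes_right_factor h_morph recL (p := ev i)).
Qed.
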